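(* Let $n$ be a positive integer such that $n\equiv \pm 2\pmod{12}$. Then it is possible to place $n-1$ queens on $\mathbb{Z}_n^2$ without conflict.
   Context: Queens are placed on distinct fields of the torus board $\mathbb{Z}_n^2$. Two queens at distinct fields $(x,y),(x',y')$ are in conflict iff $x=x'$, or $y=y'$, or $x+y=x'+y'$, or $x-y=x'-y'$ in $\mathbb{Z}_n$ (equivalently, the difference of the fields is $t\mathbf{x}$ for some $t\in\mathbb{Z}_n$ and nonzero $\mathbf{x}\in\{-1,0,1\}^2$). A placement is without conflict if no two queens are in conflict. *)

From mathcomp Require Import all_boot.
Set Implicit Arguments. Unset Strict Implicit. Unset Printing Implicit Defensive.

Definition field (n : nat) : finType := ('I_n * 'I_n)%type.

(* Two fields are in conflict iff same row, same column, same sum mod n,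
   or same difference mod n  (x - y = x' - y' in Z_n  <=>  x + y' = x' + y mod n). *)
Definition conflict (n : nat) (p q : field n) : bool :=
  [|| p.1 == q.1, p.2 == q.2,
      (p.1 + p.2 == q.1 + q.2 %[mod n])%N
    | (p.1 + q.2 == q.1 + p.2 %[mod n])%N].

Definition conflict_free (n : nat) (Q : {set field n}) : Prop :=
  forall p q, p \in Q -> q \in Q -> p != q -> ~~ conflict p q.

(* For n = 2m with m odd and 3 coprime to n, index the queens by the residues
   k <> m and put queen k at column k - [m < k] (so the columns are 0, ..., n - 2)
   and row 3k.  Rows are distinct since 3 is invertible mod n.  Writing e = [m < k],
   the two diagonals of queen k are 4k - e and -2k - e; as n is even, the parity of
   a diagonal recovers e, and then 4k and 2k determine k mod m because m is odd, which
   pins k down inside its half of Z_n. *)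
From mathcomp Require Import all_boot zify.

Lemma eqn_mod_pmul2l p x y d : 0 < p -> (p * x == p * y %[mod p * d]) = (x == y %[mod d]).
Proof. by move=> p_gt0; rewrite -!muln_modr eqn_pmul2l. Qed.

Lemma eqn_mod_coprime_mul2l c x y d : coprime c d -> (c * x == c * y %[mod d]) = (x == y %[mod d]).
Proof.
move=> cd; wlog le_yx : x y / y <= x.
  move=> IH; case: (leqP y x) => [|/ltnW]; first exact: IH.
  by move/IH; rewrite eq_sym [RHS]eq_sym.
by rewrite !eqn_mod_dvd ?leq_mul2l ?le_yx ?orbT // -mulnBr Gauss_dvdr // coprime_sym.
Qed.

Lemma odd_eqmod x y d : ~~ odd d -> x = y %[mod d] -> odd x = odd y.
Proof. by move=> /negbTE d_even xy; rewrite -(odd_mod x d_even) xy odd_mod. Qed.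

Lemma double_congr_parity m c x y (e e' : bool) : odd m -> coprime c m ->
  (c.*2 * x + e == c.*2 * y + e' %[mod m.*2]) -> e = e' /\ (x == y %[mod m]).
Proof.
move=> m_odd cm congr_xy.
have e_eq : e = e'.
  move/eqP/odd_eqmod: (congr_xy); rewrite odd_double => /(_ isT).
  by rewrite !oddD !oddM !odd_double !oddb.
split=> //; move: congr_xy; rewrite {}e_eq eqn_modDr -[c.*2]mul2n -[m.*2]mul2n.
by rewrite -!mulnA eqn_mod_pmul2l // eqn_mod_coprime_mul2l.
Qed.

Section TorusQueens.

Variables n m : nat.
Hypothesis n_double : n = m.*2.
Hypothesis m_odd : odd m.
Hypothesis coprime_3n : coprime 3 n.

Definition queen_col (k : nat) : nat := k - (m < k).

Lemma queen_colK k : queen_col k + (m < k) = k.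
Proof. by rewrite /queen_col; case: ltnP => /= ?; lia. Qed.

Lemma queen_col_inj k k' : k != m -> k' != m -> queen_col k = queen_col k' -> k = k'.
Proof. by rewrite /queen_col; case: ltnP; case: ltnP => /= *; lia. Qed.

Lemma eq_same_half_eqmod k k' : k < n -> k' < n -> k != m -> k' != m ->
  (m < k) = (m < k') -> k = k' %[mod m] -> k = k'.
Proof.
move=> lt_kn lt_k'n km k'm same_half.
wlog le_k'k : k k' lt_kn lt_k'n km k'm same_half / k' <= k.
  move=> IH; case: (leqP k' k) => [|/ltnW] le; first exact: IH.
  by move=> /esym /IH-> //; rewrite same_half.
move/eqP; rewrite eqn_mod_dvd // => /dvdn_leq dv.
by case: (posnP (k - k')) => [|/dv]; lia.
Qed.

Lemma queen_row_lt (k : 'I_n) : 3 * k %% n < n.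
Proof. by rewrite ltn_pmod // (leq_ltn_trans (leq0n k)). Qed.

Lemma queen_col_lt (k : 'I_n) : queen_col k < n.
Proof. exact: leq_ltn_trans (leq_subr _ _) (ltn_ord k). Qed.

Definition queen (k : 'I_n) : field n :=
  (Ordinal (queen_col_lt k), Ordinal (queen_row_lt k)).

Lemma queen_conflict_eq k k' : k < n -> k' < n -> k != m -> k' != m ->
  [|| queen_col k == queen_col k', 3 * k == 3 * k' %[mod n],
      queen_col k + 3 * k == queen_col k' + 3 * k' %[mod n]
    | queen_col k + 3 * k' == queen_col k' + 3 * k %[mod n]] -> k = k'.
Proof.
move=> lt_kn lt_k'n km k'm.
have colK := queen_colK k; have colK' := queen_colK k'.
case/or4P => [/eqP|congr_row|congr_sum|congr_diff].
- exact: queen_col_inj.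
- by move: congr_row; rewrite eqn_mod_coprime_mul2l // !modn_small // => /eqP.
- have {congr_sum} : 2.*2 * k + (m < k') == 2.*2 * k' + (m < k) %[mod m.*2].
    (* Adding [m < k] + [m < k'] to both sides turns each column back into its index. *)
    rewrite -(eqn_modDr ((m < k) + (m < k'))) n_double in congr_sum.
    by move: congr_sum; congr (_ == _ %[mod _]); lia.
  case/double_congr_parity => // [|same_half /eqP]; first by rewrite coprime2n.
  exact: eq_same_half_eqmod.
- have {congr_diff} : 1.*2 * k + (m < k) == 1.*2 * k' + (m < k') %[mod m.*2].
    rewrite -(eqn_modDr ((m < k) + (m < k'))) n_double in congr_diff.
    rewrite eq_sym -(eqn_modDl (k + k')); move: congr_diff.
    by congr (_ == _ %[mod _]); lia.
  case/double_congr_parity => // [|same_half /eqP]; first exact: coprime1n.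
  exact: eq_same_half_eqmod.
Qed.

Lemma queen_conflict (k k' : 'I_n) : val k != m -> val k' != m ->
  conflict (queen k) (queen k') -> k = k'.
Proof.
move=> km k'm; rewrite /conflict /= !modnDmr -!val_eqE /= => conflict_kk'.
by apply/ord_inj/queen_conflict_eq.
Qed.

Lemma torus_queens_double_odd : exists Q : {set field n}, #|Q| = n.-1 /\ conflict_free Q.
Proof.
have lt_mn : m < n by rewrite n_double -addnn -addn1 leq_add2l; case: m m_odd.
pose mid : 'I_n := Ordinal lt_mn.
have queen_inj : {in [set~ mid] &, injective queen}.
  move=> k k'; rewrite !inE -!val_eqE /= => km k'm qkk'.
  by apply: queen_conflict; rewrite // qkk' /conflict eqxx.
exists (queen @: [set~ mid]); split.
  by rewrite card_in_imset // cardsC1 card_ord.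
move=> _ _ /imsetP[k km ->] /imsetP[k' k'm ->] /eqP q_neq.
apply/negP => /queen_conflict eq_kk'; apply/q_neq; rewrite eq_kk' //.
- by move: km; rewrite !inE -val_eqE.
- by move: k'm; rewrite !inE -val_eqE.
Qed.

End TorusQueens.

Theorem lemma2 (n : nat) :
  0 < n -> (n %% 12 = 2 \/ n %% 12 = 10) ->
  exists Q : {set field n}, #|Q| = n.-1 /\ conflict_free Q.
Proof.
move=> _ n_mod12.
apply: (@torus_queens_double_odd n n./2).
- by lia.
- by lia.
- by rewrite prime_coprime // /dvdn; lia.
Qed.
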